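(* Let $N\ge3$, $N_e\ge 2$, $L\ge1$ be integers, $P>0$, $\tau\in(0,1)$, $\sigma_r>0$, $c_4\in\mathbb{C}\setminus\{0\}$, $\alpha,\beta\in\mathbb{C}$ with $|\alpha|^2+|\beta|^2=1$, $\alpha\ne0$. For $\theta\in(-\pi/2,\pi/2)$ and $\mathbf{h}\in\mathbb{C}^N\setminus\mathrm{span}(\mathbf{a}(\theta))$, let $\tilde{\mathbf{a}}=\mathbf{a}/\|\mathbf{a}\|$, $\tilde{\mathbf{h}}=\frac{\mathbf{h}-(\tilde{\mathbf{a}}^H\mathbf{h})\tilde{\mathbf{a}}}{\|\mathbf{h}-(\tilde{\mathbf{a}}^H\mathbf{h})\tilde{\mathbf{a}}\|}$, $\mathbf{t}_1=\alpha\tilde{\mathbf{a}}+\beta\tilde{\mathbf{h}}$, $\mathbf{t}_3,\dots,\mathbf{t}_N$ an orthonormal basis of the orthogonal complement of $\mathrm{span}\{\tilde{\mathbf{a}},\tilde{\mathbf{h}}\}$, and $\mathbf{R}_x=P\tau\mathbf{t}_1\mathbf{t}_1^H+\frac{(1-\tau)P}{N-2}\sum_{i=3}^N\mathbf{t}_i\mathbf{t}_i^H$. For $\phi\in(-\pi/2,\pi/2)$ define $\mathrm{CRB}(\phi)=\frac{\sigma_r^2}{2|c_4|^2L\|\mathbf{c}'(\phi)\|^2\,\mathbf{a}^H\mathbf{R}_x\mathbf{a}}$. Then $$\mathrm{CRB}(\phi)=\frac{\sigma_r^2}{2|c_4|^2L\,P\tau\,\|\mathbf{c}'\|^2|\alpha|^2N},\qquad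 \|\mathbf{c}'\|^2=\frac{\pi^2\cos^2(\phi)N_e(N_e^2-1)}{12}.$$ Moreover, if $\phi\sim\mathcal{U}(-\pi/2,\pi/2)$ then for $\epsilon>0$, with $u(\epsilon)=\sqrt6\,\sigma_r\big(\epsilon N_eN\pi^2LP|c_4|^2|\alpha|^2\tau(N_e^2-1)\big)^{-1/2}$, $P(\mathrm{CRB}(\phi)>\epsilon)=\frac2\pi\sin^{-1}(u(\epsilon))$ if $u(\epsilon)<1$, and $=1$ otherwise.
   Context: $j=\sqrt{-1}$. $\mathbf{a}(\theta)\in\mathbb{C}^N$ has $i$-th entry $e^{-j\pi\sin(\theta)\frac{N-(2i-1)}{2}}$; $\mathbf{c}(\phi)\in\mathbb{C}^{N_e}$ has $i$-th entry $e^{-j\pi\sin(\phi)\frac{N_e-(2i-1)}{2}}$ and $\mathbf{c}'=\partial\mathbf{c}/\partial\phi$. $\mathrm{CRB}(\phi)$ is the Cramér–Rao bound of a strong sensing eavesdropper (one knowing the transmitted signal) for the target angle $\phi$, under the SSJB precoding scheme with transmit covariance $\mathbf{R}_x$. *)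

From HB Require Import structures.
From mathcomp Require Import all_boot all_order all_algebra.
From mathcomp Require Import all_classical all_reals all_analysis.
From mathcomp Require Import complex.
Set Implicit Arguments. Unset Strict Implicit. Unset Printing Implicit Defensive.
Import Order.TTheory GRing.Theory Num.Theory.
Local Open Scope ring_scope.
Local Open Scope complex_scope.

Notation normc := Normc.normc.

Section Defs.
Variable R : realType.
Local Notation C := (R[i]).

Definition cexpj (x : R) : C := cos x +i* sin x.

(* uniform linear array steering vector of size n:
   i-th entry (1-indexed) e^{-j pi sin(x) (n-(2i-1))/2};
   with 0-indexed i the entry is e^{-j pi sin(x) (n-(2i+1))/2}. *)
Definition steer (n : nat) (x : R) : 'cV[C]_n :=
  \col_(i < n) cexpj (- (pi * sin x * ((n%:R - (2 * i%:R + 1)) / 2))).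

Definition avec (N : nat) (theta : R) : 'cV[C]_N := steer N theta.
Definition cvec (Ne : nat) (phi : R) : 'cV[C]_Ne := steer Ne phi.

Definition cprime (Ne : nat) (phi : R) : 'cV[C]_Ne :=
  \col_(i < Ne)
    ((derive1 (fun x : R => complex.Re (cvec Ne x i 0)) phi) +i*
     (derive1 (fun x : R => complex.Im (cvec Ne x i 0)) phi)).

Definition hadj (m n : nat) (A : 'M[C]_(m, n)) : 'M[C]_(n, m) :=
  (map_mx (@conjc R) A)^T.

Definition vnorm (n : nat) (v : 'cV[C]_n) : R :=
  Num.sqrt (\sum_(i < n) normc (v i 0) ^+ 2).

Definition atil (N : nat) (theta : R) : 'cV[C]_N :=
  ((vnorm (avec N theta))^-1)%:C *: avec N theta.

Definition hperp (N : nat) (theta : R) (h : 'cV[C]_N) : 'cV[C]_N :=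
  h - ((hadj (atil N theta) *m h) 0 0) *: atil N theta.
Definition htil (N : nat) (theta : R) (h : 'cV[C]_N) : 'cV[C]_N :=
  ((vnorm (hperp theta h))^-1)%:C *: hperp theta h.

Definition t1 (N : nat) (theta : R) (h : 'cV[C]_N) (alpha beta : C) : 'cV[C]_N :=
  alpha *: atil N theta + beta *: htil theta h.

(* R_x = P tau t1 t1^H + (1-tau) P/(N-2) sum_{i=3}^N t_i t_i^H,
   where t : 'I_(N-2) -> C^N enumerates t_3, ..., t_N *)
Definition Rx (N : nat) (P tau : R) (theta : R) (h : 'cV[C]_N) (alpha beta : C)
  (t : 'I_(N - 2) -> 'cV[C]_N) : 'M[C]_N :=
  (P * tau)%:C *: (t1 theta h alpha beta *m hadj (t1 theta h alpha beta))
  + ((1 - tau) * P / (N - 2)%:R)%:C *: \sum_(i < N - 2) (t i *m hadj (t i)).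

(* CRB(phi) = sigma_r^2 / (2 |c4|^2 L ||c'(phi)||^2 a^H R_x a)  (complex-valued;
   a^H R_x a is the 1x1 matrix entry) *)
Definition CRB (N Ne L : nat) (P tau sr : R) (c4 alpha beta : C) (theta : R)
  (h : 'cV[C]_N) (t : 'I_(N - 2) -> 'cV[C]_N) (phi : R) : C :=
  (sr ^+ 2)%:C /
  ((2 * normc c4 ^+ 2 * L%:R * vnorm (cprime Ne phi) ^+ 2)%:C *
   (hadj (avec N theta) *m Rx P tau theta h alpha beta t *m avec N theta) 0 0).

End Defs.

From HB Require Import structures.
From mathcomp Require Import all_boot all_order all_algebra.
From mathcomp Require Import all_classical all_reals all_analysis.
From mathcomp Require Import complex.
From mathcomp Require Import ring lra.
Set Implicit Arguments. Unset Strict Implicit. Unset Printing Implicit Defensive.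
Import Order.TTheory GRing.Theory Num.Theory.
Local Open Scope ring_scope.
Local Open Scope complex_scope.

(* Since a = sqrt N * atil, and atil is a unit vector orthogonal to htil and to
   every t_i with atil^H t1 = alpha, only the rank-one term of R_x contributes:
   a^H R_x a = P tau |alpha|^2 N.  Every entry of c'(phi) has modulus
   pi cos(phi) |(Ne - 2i - 1)/2|, and these centred indices have square sum
   Ne (Ne^2 - 1)/12.  Hence CRB(phi) = 6 sr^2 / (K cos^2 phi) for a constant
   K > 0, so CRB(phi) > eps exactly when cos phi < u(eps).  For u < 1 this
   happens on the two tails (-pi/2, -acos u) and (acos u, pi/2), of uniform
   probability 1 - 2 acos(u)/pi = (2/pi) asin u; for u >= 1 it happens on all of
   (-pi/2, pi/2) but possibly phi = 0. *)

Section CenteredSquares.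
Variable F : numFieldType.

Lemma sum_nat_id n : \sum_(i < n) (i%:R : F) = n%:R * (n%:R - 1) / 2.
Proof.
elim: n => [|n IH]; first by rewrite big_ord0 !mul0r.
have two_neq0 : (2 : F) != 0 by rewrite pnatr_eq0.
by rewrite big_ord_recr /= IH -natr1; field.
Qed.

Lemma sum_nat_sqr n :
  \sum_(i < n) (i%:R : F) ^+ 2 = n%:R * (n%:R - 1) * (2 * n%:R - 1) / 6.
Proof.
elim: n => [|n IH]; first by rewrite big_ord0 !mul0r.
have six_neq0 : (6 : F) != 0 by rewrite pnatr_eq0.
by rewrite big_ord_recr /= IH -natr1; field.
Qed.

Lemma sum_centered_sqr n :
  \sum_(i < n) ((n%:R - (2 * i%:R + 1)) / 2) ^+ 2 = n%:R * (n%:R ^+ 2 - 1) / 12 :> F.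
Proof.
have two_neq0 : (2 : F) != 0 by rewrite pnatr_eq0.
have six_neq0 : (6 : F) != 0 by rewrite pnatr_eq0.
have twelve_neq0 : (12 : F) != 0 by rewrite pnatr_eq0.
under eq_bigr => i _.
  have -> : ((n%:R - (2 * i%:R + 1)) / 2) ^+ 2
      = (n%:R - 1) ^+ 2 / 4 - (n%:R - 1) * (i%:R : F) + (i%:R : F) ^+ 2 by field.
  over.
rewrite !big_split /= sumr_const card_ord sumrN -mulr_sumr sum_nat_id sum_nat_sqr.
by rewrite -mulr_natr; field.
Qed.

End CenteredSquares.

Section ComplexVectors.
Variable R : realType.
Local Notation C := R[i].

Lemma normc_ge0 (z : C) : 0 <= normc z.
Proof. by case: z => a b; exact: sqrtr_ge0. Qed.

Lemma normc_gt0 (z : C) : (0 < normc z) = (z != 0).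
Proof.
rewrite lt_def normc_ge0 andbT; apply/idP/idP; apply: contra => /eqP.
- by move=> ->; rewrite Normc.normc0.
- by move/Normc.eq0_normc => ->.
Qed.

Lemma normc_sqrE (z : C) : normc z ^+ 2 = complex.Re z ^+ 2 + complex.Im z ^+ 2.
Proof. by case: z => a b /=; rewrite sqr_sqrtr ?addr_ge0 ?sqr_ge0. Qed.

Lemma normc_sqrC (z : C) : (normc z ^+ 2)%:C = z * z^*.
Proof.
rewrite normc_sqrE; case: z => a b /=.
by apply/eqP; rewrite eq_complex /=; apply/andP; split; apply/eqP; ring.
Qed.

Lemma normc_cexpj (x : R) : normc (cexpj x) = 1.
Proof. by rewrite /cexpj /= cos2Dsin2 sqrtr1. Qed.

Lemma vnorm_sqr n (v : 'cV[C]_n) : vnorm v ^+ 2 = \sum_i normc (v i 0) ^+ 2.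
Proof. by rewrite sqr_sqrtr // sumr_ge0 // => i _; rewrite sqr_ge0. Qed.

Lemma vnorm_steer n (x : R) : vnorm (steer n x) = Num.sqrt n%:R.
Proof.
rewrite /vnorm (eq_bigr (fun=> 1)) ?sumr_const ?card_ord // => i _.
by rewrite mxE normc_cexpj expr1n.
Qed.

Definition dotc n (v w : 'cV[C]_n) : C := (hadj v *m w) 0 0.

Lemma dotcE n (v w : 'cV[C]_n) : dotc v w = \sum_i (v i 0)^* * w i 0.
Proof. by rewrite /dotc /hadj !mxE; apply: eq_bigr => i _; rewrite !mxE. Qed.

Lemma dotcDr n (v w1 w2 : 'cV[C]_n) : dotc v (w1 + w2) = dotc v w1 + dotc v w2.
Proof. by rewrite /dotc mulmxDr mxE. Qed.

Lemma dotcNr n (v w : 'cV[C]_n) : dotc v (- w) = - dotc v w.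
Proof. by rewrite /dotc mulmxN mxE. Qed.

Lemma dotcZr n (v w : 'cV[C]_n) c : dotc v (c *: w) = c * dotc v w.
Proof. by rewrite /dotc -scalemxAr mxE. Qed.

Lemma dotcZl n (v w : 'cV[C]_n) c : dotc (c *: v) w = c^* * dotc v w.
Proof.
by rewrite !dotcE mulr_sumr; apply: eq_bigr => i _; rewrite mxE rmorphM /= mulrA.
Qed.

Lemma dotcJ n (v w : 'cV[C]_n) : dotc w v = (dotc v w)^*.
Proof.
rewrite !dotcE rmorph_sum; apply: eq_bigr => i _.
by rewrite rmorphM /= conjcK mulrC.
Qed.

Lemma dotcc n (v : 'cV[C]_n) : dotc v v = (vnorm v ^+ 2)%:C.
Proof.
rewrite dotcE vnorm_sqr rmorph_sum; apply: eq_bigr => i _ /=.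
by rewrite normc_sqrC mulrC.
Qed.

Lemma dotc_normalize n (v : 'cV[C]_n) (u := ((vnorm v)^-1)%:C *: v) :
  vnorm v != 0 -> dotc u u = 1.
Proof.
move=> v_neq0; rewrite /u dotcZl dotcZr dotcc mulrA [_^* * _]mulrC -normc_sqrC.
rewrite normc_sqrE /= expr0n addr0 -rmorphM exprVn mulVf ?expf_neq0 //.
Qed.

Lemma dotc_proj_orth n (u w : 'cV[C]_n) :
  dotc u u = 1 -> dotc u (w - dotc u w *: u) = 0.
Proof. by move=> uu; rewrite dotcDr dotcNr dotcZr uu mulr1 subrr. Qed.

Definition qform n (v : 'cV[C]_n) (M : 'M[C]_n) : C := (hadj v *m M *m v) 0 0.

Lemma qformE n (v : 'cV[C]_n) M : qform v M = dotc v (M *m v).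
Proof. by rewrite /qform /dotc mulmxA. Qed.

Lemma qformD n (v : 'cV[C]_n) M1 M2 : qform v (M1 + M2) = qform v M1 + qform v M2.
Proof. by rewrite /qform mulmxDr mulmxDl mxE. Qed.

Lemma qformZ n (v : 'cV[C]_n) c M : qform v (c *: M) = c * qform v M.
Proof. by rewrite /qform -scalemxAr -scalemxAl mxE. Qed.

Lemma qform_sum n m (v : 'cV[C]_n) (M : 'I_m -> 'M[C]_n) :
  qform v (\sum_i M i) = \sum_i qform v (M i).
Proof. by rewrite /qform mulmx_sumr mulmx_suml summxE. Qed.

Lemma qformZl n (v : 'cV[C]_n) c M : qform (c *: v) M = (normc c ^+ 2)%:C * qform v M.
Proof. by rewrite !qformE -scalemxAr dotcZl dotcZr normc_sqrC; ring. Qed.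

Lemma qform_rank1 n (v u : 'cV[C]_n) :
  qform v (u *m hadj u) = (normc (dotc v u) ^+ 2)%:C.
Proof.
have -> : qform v (u *m hadj u) = dotc v u * dotc u v.
  by rewrite /qform !mulmxA -(mulmxA (hadj v *m u)) mxE big_ord1.
by rewrite (dotcJ v u) normc_sqrC.
Qed.

End ComplexVectors.

Section TransmitCovariance.
Variables (R : realType) (N : nat) (P tau theta : R) (h : 'cV[R[i]]_N).
Variables (alpha beta : R[i]) (t : 'I_(N - 2) -> 'cV[R[i]]_N).
Hypothesis N_gt0 : (0 < N)%N.
Hypothesis atil_orth_t : forall i, hadj (atil N theta) *m t i = 0.

Lemma avec_atil : avec N theta = (Num.sqrt N%:R)%:C *: atil N theta.
Proof.
rewrite /atil /avec vnorm_steer scalerA -rmorphM divff ?rmorph1 ?scale1r //.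
by rewrite sqrtr_eq0 -ltNge ltr0n.
Qed.

Lemma dotc_atil_atil : dotc (atil N theta) (atil N theta) = 1.
Proof.
by apply: dotc_normalize; rewrite /avec vnorm_steer sqrtr_eq0 -ltNge ltr0n.
Qed.

Lemma dotc_atil_htil : dotc (atil N theta) (htil theta h) = 0.
Proof. by rewrite /htil /hperp dotcZr (dotc_proj_orth _ dotc_atil_atil) mulr0. Qed.

Lemma dotc_atil_t1 : dotc (atil N theta) (t1 theta h alpha beta) = alpha.
Proof.
rewrite /t1 dotcDr (dotcZr _ (atil N theta)) (dotcZr _ (htil theta h)).
by rewrite dotc_atil_atil dotc_atil_htil mulr1 mulr0 addr0.
Qed.

Lemma qform_atil_Rx :
  qform (atil N theta) (Rx P tau theta h alpha beta t)
  = (P * tau * normc alpha ^+ 2)%:C.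
Proof.
rewrite /Rx qformD !qformZ qform_rank1 dotc_atil_t1 qform_sum big1 ?mulr0 ?addr0.
  by rewrite [RHS]rmorphM.
by move=> i _; rewrite qform_rank1 /dotc atil_orth_t mxE Normc.normc0 expr0n.
Qed.

Lemma qform_avec_Rx :
  qform (avec N theta) (Rx P tau theta h alpha beta t)
  = (P * tau * normc alpha ^+ 2 * N%:R)%:C.
Proof.
rewrite avec_atil qformZl qform_atil_Rx normc_sqrE /= expr0n addr0.
by rewrite sqr_sqrtr ?ler0n // -rmorphM mulrC.
Qed.

Lemma CRB_closed_form (Ne L : nat) (sr : R) (c4 : R[i]) (phi : R) :
  CRB Ne L P tau sr c4 alpha beta theta h t phi =
    (sr ^+ 2 / (2 * normc c4 ^+ 2 * L%:R * P * tau *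
       vnorm (cprime Ne phi) ^+ 2 * normc alpha ^+ 2 * N%:R))%:C.
Proof.
rewrite /CRB -[(hadj _ *m _ *m _) 0 0]/(qform _ _) qform_avec_Rx -rmorphM -fmorph_div.
by congr (_%:C); congr (_ / _); ring.
Qed.

End TransmitCovariance.

Section ArrayDerivative.
Variable R : realType.

Lemma derive1_cos_sin_comp_sqr (g : R -> R) (x g' : R) : is_derive x 1 g g' ->
  derive1 (cos \o g) x ^+ 2 + derive1 (sin \o g) x ^+ 2 = g' ^+ 2.
Proof.
move=> dg; have dcos := is_derive1_comp (is_derive_cos (g x)) dg.
have dsin := is_derive1_comp (is_derive_sin (g x)) dg.
rewrite !derive1E (@derive_val _ _ _ _ _ _ _ dcos) (@derive_val _ _ _ _ _ _ _ dsin).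
by rewrite !exprMn sqrrN -mulrDl addrC cos2Dsin2 mul1r.
Qed.

Lemma normc_cprime_sqr (Ne : nat) (phi : R) (i : 'I_Ne) :
  normc (cprime Ne phi i 0) ^+ 2
  = (pi * cos phi) ^+ 2 * ((Ne%:R - (2 * i%:R + 1)) / 2) ^+ 2.
Proof.
set k := (_ / 2); pose g y := - (pi * sin y * k).
have dg : is_derive phi 1 g (- (pi * cos phi * k)).
  have -> : g = (- (pi * k)) \*: (@sin R).
    apply/funext => y; rewrite /g.
    by change (- (pi * sin y * k) = - (pi * k) * sin y); ring.
  by apply: is_derive_eq; rewrite /GRing.scale /=; ring.
rewrite /cprime mxE normc_sqrE /=.
have -> : (fun x => complex.Re (cvec Ne x i 0)) = cos \o g.
  by apply/funext => x; rewrite /cvec /steer mxE.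
have -> : (fun x => complex.Im (cvec Ne x i 0)) = sin \o g.
  by apply/funext => x; rewrite /cvec /steer mxE.
by rewrite (derive1_cos_sin_comp_sqr dg); ring.
Qed.

Lemma vnorm_cprime_sqr (Ne : nat) (phi : R) :
  vnorm (cprime Ne phi) ^+ 2 = pi ^+ 2 * cos phi ^+ 2 * Ne%:R * (Ne%:R ^+ 2 - 1) / 12.
Proof.
rewrite vnorm_sqr; under eq_bigr do rewrite normc_cprime_sqr.
by rewrite -mulr_sumr sum_centered_sqr; ring.
Qed.

End ArrayDerivative.

Section UniformProbability.
Variable R : realType.
Local Open Scope classical_set_scope.

Lemma eq_uniform_prob (a b : R) (ab : a < b) (A B : set R) :
  (forall x, a <= x <= b -> A x = B x) -> uniform_prob ab A = uniform_prob ab B.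
Proof.
move=> AB; rewrite /uniform_prob integral_uniform_pdf [RHS]integral_uniform_pdf.
congr (integral _ _ _); apply/seteqP; split=> x [Ax xab]; split=> //;
  move: (xab); rewrite /= in_itv /= => /AB ABx.
- by rewrite -ABx.
- by rewrite ABx.
Qed.

Lemma uniform_prob_itv (a b x y : R) (ab : a < b) : a <= x -> x <= y -> y <= b ->
  uniform_prob ab `]x, y[ = ((y - x) / (b - a))%:E.
Proof.
move=> ax xy yb; rewrite /uniform_prob.
rewrite (eq_integral (fun=> ((b - a)^-1)%:E)); last first.
  move=> z; rewrite inE /= in_itv /= => /andP[xz zy].
  by rewrite /uniform_pdf ifT //; apply/andP; split; lra.
rewrite integral_cst //= lebesgue_measure_itv /= lte_fin.
case: ifPn => [_|]; first by rewrite -EFinD -EFinM mulrC.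
by rewrite -leNgt => yx; rewrite (@le_anti _ _ x y) ?xy ?yx // subrr mul0r mule0.
Qed.

Lemma uniform_prob_itv_tails (a b x y : R) (ab : a < b) : a <= x -> x <= y -> y <= b ->
  uniform_prob ab (`]a, x[ `|` `]y, b[) = (1 - (y - x) / (b - a))%:E.
Proof.
move=> ax xy yb; rewrite measureU //=; last first.
  apply/seteqP; split=> // z [] /=.
  by rewrite !in_itv /= => /andP[_ zx] /andP[yz _]; lra.
rewrite (uniform_prob_itv ab (lexx a) ax (le_trans xy yb)).
rewrite (uniform_prob_itv ab (le_trans ax xy) yb (lexx b)) -EFinD; congr (_%:E).
have ba_neq0 : b - a != 0 by rewrite subr_eq0 gt_eqF.
by field.
Qed.

End UniformProbability.

Section CosineThreshold.
Variable R : realType.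
Local Open Scope classical_set_scope.

Lemma cos_gt0_pihalf_itv (x : R) : - (pi / 2) <= x <= pi / 2 ->
  (0 < cos x) = (- (pi / 2) < x < pi / 2).
Proof.
move=> /andP[x_ge x_le]; apply/idP/idP; last by move/cos_gt0_pihalf.
have [->|xN] := eqVneq x (- (pi / 2)); first by rewrite cosN cos_pihalf !ltxx.
have [->|xP] := eqVneq x (pi / 2); first by rewrite cos_pihalf !ltxx.
by move=> _; rewrite !lt_neqAle x_ge x_le eq_sym xN xP.
Qed.

Lemma cos_lt_cos_pihalf (c x : R) : 0 <= c <= pi / 2 -> - (pi / 2) < x < pi / 2 ->
  (cos x < cos c) = (x < - c) || (c < x).
Proof.
move=> /andP[c_ge0 c_le] /andP[x_gt x_lt]; have pi_gt0 : (0 : R) < pi := pi_gt0 R.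
have [x_ge0|x_lt0] := leP 0 x.
  rewrite ltr_cos ?in_itv /=; try by apply/andP; split; lra.
  by rewrite (_ : x < - c = false) //; apply/negbTE; rewrite -leNgt; lra.
rewrite -cosN ltr_cos ?in_itv /=; try by apply/andP; split; lra.
by rewrite ltrNr (_ : c < x = false) ?orbF //; apply/negbTE; rewrite -leNgt; lra.
Qed.

Lemma pihalfB_acos (u : R) : -1 <= u <= 1 -> pi / 2 - acos u = asin u.
Proof.
move=> u_itv; have acos_u_ge0 := acos_ge0 u_itv; have acos_u_le := acos_lepi u_itv.
have sin_u : sin (pi / 2 - acos u) = u.
  by rewrite -opprB sinN sinBpihalf opprK acosK // in_itv.
by rewrite -{2}sin_u sinK // in_itv /=; apply/andP; split; lra.
Qed.

Lemma uniform_prob_cos_lt (hpi : - (pi / 2) < pi / 2 :> R) (u : R) : 0 < u ->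
  uniform_prob hpi [set x | (- (pi / 2) < x < pi / 2) && (cos x < u)]
  = (if u < 1 then 2 / pi * asin u else 1)%:E.
Proof.
move=> u_gt0; have pi_gt0 : (0 : R) < pi := pi_gt0 R.
have [u_gt1|u_le1] := ltP 1 u.
  rewrite ltNge (ltW u_gt1) /= (@eq_uniform_prob _ _ _ _ _ `]- (pi / 2), pi / 2[).
    by rewrite uniform_prob_itv ?lexx ?(ltW hpi) // divff // gt_eqF // subr_gt0.
  move=> x _; rewrite /= in_itv /=.
  by rewrite (le_lt_trans (cos_le1 x) u_gt1) andbT.
have u_itv : -1 <= u <= 1 by apply/andP; split; lra.
set c := acos u; have cos_c : cos c = u by rewrite /c acosK // in_itv.
have c_ge0 : 0 <= c := acos_ge0 u_itv.
have c_le_pi : c <= pi := acos_lepi u_itv.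
have c_lt : c < pi / 2.
  have : (cos (pi / 2) < cos c) = (c < pi / 2).
    by apply: ltr_cos; rewrite in_itv /=; apply/andP; split; lra.
  by rewrite cos_pihalf cos_c u_gt0.
rewrite (@eq_uniform_prob _ _ _ _ _ (`]- (pi / 2), - c[ `|` `]c, pi / 2[)); last first.
  move=> x _; rewrite /= -cos_c !in_itv /=; apply/propext; split.
    case/andP=> x_itv; rewrite cos_lt_cos_pihalf ?c_ge0 ?(ltW c_lt) //.
    by case/orP=> x_c; [left | right]; apply/andP; split; lra.
  move=> x_tails; have x_itv : - (pi / 2) < x < pi / 2.
    by case: x_tails => /andP[x_l x_r]; apply/andP; split; lra.
  rewrite x_itv cos_lt_cos_pihalf ?c_ge0 ?(ltW c_lt) //=.
  by case: x_tails => /andP[x_l x_r]; apply/orP; [left | right]; lra.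
rewrite uniform_prob_itv_tails; [|lra..].
have [u_lt1|u_ge1] := ltP u 1.
  rewrite -pihalfB_acos // -/c; congr (_%:E).
  (* hide the definition of [pi] from [field] *)
  set p := pi in pi_gt0 *; clearbody p.
  by field; rewrite opprK !gt_eqF ?addr_gt0.
have -> : c = 0 by rewrite /c (_ : u = 1) ?acos1 //; apply/eqP; rewrite eq_le u_le1.
by rewrite oppr0 subrr mul0r subr0.
Qed.

Lemma ltr_pdiv_sqr (d e s K q : R) : 0 < d -> 0 < e -> 0 < s -> 0 < K -> 0 <= q ->
  (e < s ^+ 2 / (K * q ^+ 2 / d))
  = (0 < q) && (q < Num.sqrt d * s / Num.sqrt (e * K)).
Proof.
move=> d_gt0 e_gt0 s_gt0 K_gt0; rewrite le_eqVlt => /orP[/eqP <-|q_gt0].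
  (* [s ^+ 2 / 0 = 0], so at [q = 0] both sides are false *)
  by rewrite expr0n /= mulr0 mul0r invr0 mulr0 ltxx; apply/negbTE; rewrite -leNgt ltW.
have eK_gt0 : 0 < e * K by rewrite mulr_gt0.
rewrite q_gt0 /= ltr_pdivlMr ?divr_gt0 ?mulr_gt0 ?exprn_gt0 //.
rewrite ltr_pdivlMr ?sqrtr_gt0 // -[RHS](@ltr_pXn2r _ 2) // ?nnegrE;
  try by rewrite mulr_ge0 ?sqrtr_ge0 ?ltW.
rewrite !exprMn !sqr_sqrtr ?ltW //.
have -> : e * (K * q ^+ 2 / d) = q ^+ 2 * (e * K) / d by field; rewrite gt_eqF.
by rewrite ltr_pdivrMr // [s ^+ 2 * _]mulrC.
Qed.

End CosineThreshold.

Theorem lemma4 (R : realType) (N Ne L : nat) (P tau sr : R) (c4 alpha beta : R[i])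
  (theta : R) (h : 'cV[R[i]]_N) (t : 'I_(N - 2) -> 'cV[R[i]]_N)
  (hpi : - (pi / 2) < pi / 2 :> R) :
  (3 <= N)%N -> (2 <= Ne)%N -> (1 <= L)%N ->
  0 < P -> 0 < tau < 1 -> 0 < sr ->
  c4 != 0 -> normc alpha ^+ 2 + normc beta ^+ 2 = 1 -> alpha != 0 ->
  - (pi / 2) < theta < pi / 2 ->
  (forall z : R[i], h != z *: avec N theta) ->
  (* t_3, ..., t_N: orthonormal basis of span{atil, htil}^perp *)
  (forall i j, hadj (t i) *m t j = ((i == j)%:R)%:M) ->
  (forall i, hadj (atil N theta) *m t i = 0) ->
  (forall i, hadj (htil theta h) *m t i = 0) ->
  (forall v : 'cV[R[i]]_N, hadj (atil N theta) *m v = 0 ->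
     hadj (htil theta h) *m v = 0 ->
     exists c : 'I_(N - 2) -> R[i], v = \sum_(i < N - 2) c i *: t i) ->
  (forall phi : R, - (pi / 2) < phi < pi / 2 ->
     CRB Ne L P tau sr c4 alpha beta theta h t phi =
       (sr ^+ 2 / (2 * normc c4 ^+ 2 * L%:R * P * tau *
          vnorm (cprime Ne phi) ^+ 2 * normc alpha ^+ 2 * N%:R))%:C
     /\ vnorm (cprime Ne phi) ^+ 2 =
          pi ^+ 2 * cos phi ^+ 2 * Ne%:R * (Ne%:R ^+ 2 - 1) / 12) /\
  (forall eps : R, 0 < eps ->
     let u := Num.sqrt 6 * sr /
       Num.sqrt (eps * Ne%:R * N%:R * pi ^+ 2 * L%:R * P * normc c4 ^+ 2 *
                 normc alpha ^+ 2 * tau * (Ne%:R ^+ 2 - 1)) in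
     uniform_prob hpi
       [set phi : R | eps%:C < CRB Ne L P tau sr c4 alpha beta theta h t phi] =
     (if u < 1 then 2 / pi * asin u else 1)%:E).
Proof.
(* of the hypotheses on h and the t_i, only [t_i _|_ atil] is needed *)
move=> N_ge3 Ne_ge2 L_ge1 P_gt0 /andP[tau_gt0 _] sr_gt0 c4_neq0 _ alpha_neq0 _ _ _
  atil_orth_t _ _.
have N_gt0 : (0 < N)%N by apply: leq_trans N_ge3.
split=> [phi _|eps eps_gt0 u].
  by split; [exact: CRB_closed_form | exact: vnorm_cprime_sqr].
set K := Ne%:R * N%:R * pi ^+ 2 * L%:R * P * normc c4 ^+ 2 * normc alpha ^+ 2 * tau
         * (Ne%:R ^+ 2 - 1).
have K_gt0 : 0 < K.
  have Ne_ge2R : (2 : R) <= Ne%:R by rewrite ler_nat.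
  rewrite /K !mulr_gt0 ?exprn_gt0 ?normc_gt0 ?ltr0n ?pi_gt0 //.
  - by apply: leq_trans Ne_ge2.
  - nra.
have uE : u = Num.sqrt 6 * sr / Num.sqrt (eps * K).
  by rewrite /u /K; congr (_ / Num.sqrt _); ring.
have u_gt0 : 0 < u.
  have sqrt6_gt0 : 0 < Num.sqrt 6 :> R by rewrite sqrtr_gt0 ltr0n.
  have sqrt_eK_gt0 : 0 < Num.sqrt (eps * K) by rewrite sqrtr_gt0 mulr_gt0.
  by rewrite uE divr_gt0 ?mulr_gt0.
have CRB_cos phi : CRB Ne L P tau sr c4 alpha beta theta h t phi
                   = (sr ^+ 2 / (K * cos phi ^+ 2 / 6))%:C.
  rewrite CRB_closed_form // vnorm_cprime_sqr; congr (_%:C); congr (_ / _).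
  have twelve_neq0 : (12 : R) != 0 by rewrite pnatr_eq0.
  have six_neq0 : (6 : R) != 0 by rewrite pnatr_eq0.
  by rewrite /K; field.
rewrite -(uniform_prob_cos_lt hpi u_gt0); apply: eq_uniform_prob => phi phi_itv /=.
by rewrite CRB_cos ltcR ltr_pdiv_sqr ?ltr0n ?cos_ge0_pihalf // -uE cos_gt0_pihalf_itv.
Qed.
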